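(* Let $G$ be a finite abelian group with $|G|\ge 2$. Then \[ \mathsf{BO}(|G|-1,G)=\begin{cases}|G|-1, & \text{if } \mathsf{r}_2(G)=1,\\ |G|+1, & \text{otherwise.}\end{cases} \]
   Context: Groups are written additively. For a positive integer $k$, a set $\{g_1,\dots,g_k\}$ of $k$ distinct elements of a finite abelian group $G$ is called $k$-barycentric if $\sum_{i=1}^k g_i = k\,g_j$ for some $1\le j\le k$. The $k$-th barycentric Olson constant $\mathsf{BO}(k,G)$ is the smallest integer $\ell$ such that every subset $A\subseteq G$ with $|A|\ge \ell$ contains a $k$-barycentric subset (so that always $\mathsf{BO}(k,G)\le |G|+1$, the condition being vacuous for $\ell>|G|$). Writing $G\cong \mathbb{Z}/n_1\mathbb{Z}\times\cdots\times\mathbb{Z}/n_r\mathbb{Z}$ with $1<n_1\mid\cdots\mid n_r$, the $2$-rank $\mathsf{r}_2(G)$ is the number of indices $i$ with $2\mid n_i$. *)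

From HB Require Import structures.
From mathcomp Require Import all_boot all_order all_algebra.
Set Implicit Arguments. Unset Strict Implicit. Unset Printing Implicit Defensive.
Import GRing.Theory.
Local Open Scope ring_scope.

(* A finite abelian group, written additively, is a finZmodType. *)

Definition barycentric (G : finZmodType) (k : nat) (B : {set G}) : bool :=
  (#|B| == k)%N && [exists g in B, (\sum_(x in B) x) == g *+ k].

Definition BO_prop (G : finZmodType) (k l : nat) : bool :=
  [forall A : {set G}, (l <= #|A|)%N ==>
     [exists B : {set G}, (B \subset A) && barycentric k B]].

Lemma BO_prop_ex (G : finZmodType) (k : nat) : exists l, BO_prop G k l.
Proof.
exists (#|G|.+1); apply/forallP => A; apply/implyP => HA.
by move: (max_card A); rewrite leqNgt HA.
Qed.

Definition BO (G : finZmodType) (k : nat) : nat := ex_minn (BO_prop_ex G k).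

(* 2-rank: G[2] = {x | 2x = 0} is elementary abelian of order 2^r_2(G). *)
Definition rank2 (G : finZmodType) : nat :=
  logn 2 #|[set x : G | x *+ 2 == 0]|.

From HB Require Import structures.
From mathcomp Require Import all_boot all_order all_algebra.
From mathcomp Require Import fingroup cyclic zify.
Import GRing.Theory FinRing.Theory.
Set Implicit Arguments. Unset Strict Implicit.
Local Open Scope ring_scope.

(* For k = |G| - 1 a k-subset is G minus one point a, with sum S - a where
   S is the sum of all elements of G; since (|G| - 1) g = -g, it is
   barycentric iff g := a - S lies in it, i.e. iff S != 0.  So either every
   or no (|G| - 1)-subset is barycentric, which gives BO = |G| - 1 or |G| + 1.
   Pairing x with -x leaves only the 2-torsion G[2] in S, and pairing x with
   x + e for some e != 0 in G[2] gives S = e *+ (|G[2]| / 2), which is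
   nonzero iff |G[2]| = 2. *)

Lemma exists_subset_card (T : finType) (A : {set T}) k :
  (k <= #|A|)%N -> exists2 B : {set T}, B \subset A & #|B| = k.
Proof.
move=> leKA; exists [set x in take k (enum A)].
  by apply/subsetP => x; rewrite inE => /mem_take; rewrite mem_enum.
by rewrite cardsE (card_uniqP (take_uniq _ (enum_uniq _))) size_takel -?cardE.
Qed.

Lemma card_pred_setC1 (T : finType) (B : {set T}) :
  #|B|.+1 = #|T| -> exists a, B = [set~ a].
Proof.
move=> cardB; have /cards1P[a Ba] : #|~: B| == 1%N.
  by rewrite -(eqn_add2l #|B|) cardsC -cardB addn1.
by exists a; rewrite -Ba setCK.
Qed.

Section BarycentricOlson.

Variables (G : finZmodType) (k : nat).

Lemma BO_eq l : BO_prop G k l -> (forall m, BO_prop G k m -> l <= m)%N ->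
  BO G k = l.
Proof.
move=> BOl minl; rewrite /BO; case: ex_minnP => m BOm minm.
by apply/eqP; rewrite eqn_leq minm // minl.
Qed.

Lemma BO_prop_gt_card l : (#|G| < l)%N -> BO_prop G k l.
Proof.
move=> ltGl; apply/forallP => A; apply/implyP => leLA.
by have := leq_trans ltGl leLA; rewrite ltnNge max_card.
Qed.

Lemma BO_prop_barycentric_sets :
  (forall B : {set G}, #|B| = k -> barycentric k B) -> BO_prop G k k.
Proof.
move=> baryG; apply/forallP => A; apply/implyP => /exists_subset_card[B sBA cardB].
by apply/existsP; exists B; rewrite sBA baryG.
Qed.

Lemma BO_prop_ge l : (k <= #|G|)%N -> BO_prop G k l -> (k <= l)%N.
Proof.
move=> leKG /forallP BOl; have [ltGl | leLG] := ltnP #|G| l.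
  exact: leq_trans leKG (ltnW ltGl).
have [A _ cardA] : exists2 A : {set G}, A \subset [set: G] & #|A| = l.
  by apply: exists_subset_card; rewrite cardsT.
have /implyP/(_ _)/existsP[|B /andP[sBA /andP[/eqP cardB _]]] := BOl A.
  by rewrite cardA.
by rewrite -cardB -cardA subset_leq_card.
Qed.

Lemma BO_prop_no_barycentric l :
  (forall B : {set G}, ~~ barycentric k B) -> BO_prop G k l -> (#|G| < l)%N.
Proof.
move=> nobary /forallP BOl; rewrite ltnNge; apply/negP => leLG.
have /implyP/(_ _)/existsP[|B /andP[_ baryB]] := BOl [set: G].
  by rewrite cardsT.
by rewrite (negbTE (nobary B)) in baryB.
Qed.

End BarycentricOlson.

Lemma logn2_double_eq1 m : (0 < m)%N -> (logn 2 (2 * m) == 1%N) = odd m.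
Proof.
move=> m_gt0; rewrite lognM // logn_prime // eqxx add1n eqSS.
by rewrite -[logn 2 m == 0%N]negbK -lt0n logn_gt0 mem_primes /= m_gt0 dvdn2 negbK.
Qed.

Section SumOfAllElements.

Variable G : finZmodType.

Lemma sum_paired_set (A : {set G}) (f : G -> G) (c : G) :
  {in A, forall x, [/\ f x \in A, f (f x) = x, f x != x & x + f x = c]} ->
  \sum_(x in A) x = c *+ #|A|./2 /\ ~~ odd #|A|.
Proof.
move: {2}#|A| (leqnn #|A|) => n; elim: n A => [|n IHn] A leAn pairA.
  by move: leAn; rewrite leqn0 => /eqP/cards0_eq->; rewrite big_set0 cards0.
have [-> | [x Ax]] := set_0Vmem A; first by rewrite big_set0 cards0.
have [fAx ffx fxx sum_x] := pairA x Ax.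
have fAx' : f x \in A :\ x by rewrite !inE fxx.
set A' := A :\ x :\ f x.
have cardA' : #|A| = (#|A'| + 2)%N.
  by rewrite (cardsD1 x A) Ax (cardsD1 (f x) (A :\ x)) fAx' /A'; lia.
have pairA' : {in A', forall y, [/\ f y \in A', f (f y) = y, f y != y & y + f y = c]}.
  move=> y; rewrite !inE => /and3P[yfx yx Ay].
  have [fAy ffy fyy sum_y] := pairA y Ay.
  split=> //; rewrite fAy andbT; apply/andP; split.
    by apply: contra yx => /eqP fyfx; rewrite -ffy fyfx ffx.
  by apply: contra yfx => /eqP fyx; rewrite -fyx ffy.
have leA'n : (#|A'| <= n)%N by move: leAn; rewrite cardA' addn2 => /ltnW.
have [sumA' evenA'] := IHn A' leA'n pairA'.
rewrite (big_setD1 x Ax) (big_setD1 (f x) fAx') /= -/A' sumA' addrA sum_x cardA'.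
by rewrite oddD (negbTE evenA') addn2 mulrS.
Qed.

Definition two_torsion := [set x : G | x *+ 2 == 0].

Lemma sum_finZmod_two_torsion : \sum_(x : G) x = \sum_(x in two_torsion) x.
Proof.
rewrite (eq_bigl [in [set: G]]) => [|x]; last by rewrite inE.
rewrite (big_setID two_torsion) /= setTI setTD.
have pairN : {in ~: two_torsion, forall x,
    [/\ - x \in ~: two_torsion, - - x = x, - x != x & x + - x = 0]}.
  move=> x; rewrite !inE => x2; rewrite mulNrn oppr_eq0 opprK subrr.
  by split=> //; apply: contra x2 => /eqP xN; rewrite mulr2n -{1}xN addNr.
by have [-> _] := sum_paired_set pairN; rewrite mul0rn addr0.
Qed.

Lemma sum_finZmod_neq0 : (\sum_(x : G) x != 0) = (rank2 G == 1%N).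
Proof.
rewrite sum_finZmod_two_torsion /rank2 -/two_torsion.
have [T0 | [e]] := set_0Vmem (two_torsion :\ 0).
  have -> : two_torsion = [set 0].
    apply/setP => y; rewrite in_set1; apply/idP/eqP => [Ty | ->].
      by apply/eqP; apply: contraFT (in_set0 y) => y0; rewrite -T0 in_setD1 y0 Ty.
    by rewrite inE mul0rn.
  by rewrite big_set1 eqxx cards1 logn1.
rewrite !inE => /andP[e0 /eqP e2].
have pairE : {in two_torsion, forall x,
    [/\ x + e \in two_torsion, x + e + e = x, x + e != x & x + (x + e) = e]}.
  move=> x; rewrite !inE => /eqP x2.
  rewrite mulrnDl x2 e2 addr0 -addrA -mulr2n e2 addr0 addrA -mulr2n x2 add0r.
  by split=> //; rewrite -subr_eq0 addrAC subrr add0r.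
have [-> evenT] := sum_paired_set pairE.
set m := #|two_torsion|./2.
have cardT : #|two_torsion| = (2 * m)%N.
  by rewrite -[LHS]odd_double_half (negbTE evenT) -mul2n.
have m_gt0 : (0 < m)%N.
  suff : (0 < #|two_torsion|)%N by rewrite cardT muln_gt0.
  by apply/card_gt0P; exists 0; rewrite inE mul0rn.
have -> : e *+ m = e *+ odd m.
  by rewrite -[in LHS](odd_double_half m) mulrnDr -mul2n mulrnA e2 mul0rn addr0.
rewrite cardT logn2_double_eq1 //.
by case: (odd m); rewrite ?e0 ?mulr0n ?eqxx.
Qed.

Lemma mulrn_card (x : G) : x *+ #|G| = 0.
Proof. by rewrite -zmodXgE -cardsT expg_cardG ?inE. Qed.

Lemma mulrn_card_pred (x : G) : x *+ (#|G| - 1) = - x.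
Proof.
apply/eqP; rewrite -subr_eq0 opprK -mulrSr subn1 prednK ?mulrn_card //.
by apply/card_gt0P; exists 0.
Qed.

Lemma barycentric_card_pred (B : {set G}) :
  barycentric (#|G| - 1) B = (#|B| == #|G| - 1)%N && (\sum_(x : G) x != 0).
Proof.
rewrite /barycentric; have [cardB | //] := eqVneq; rewrite /=.
have [a ->] : exists a, B = [set~ a].
  apply: card_pred_setC1; rewrite cardB subn1 prednK //.
  by apply/card_gt0P; exists 0.
have sumG : \sum_(x : G) x = a + \sum_(x in [set~ a]) x.
  rewrite (eq_bigl [in [set: G]]) => [|x]; last by rewrite inE.
  by rewrite (big_setD1 a (in_setT a)) setTD.
have -> : \sum_(x in [set~ a]) x = \sum_(x : G) x - a by rewrite sumG addrC addKr.
apply/existsP/idP => [[g /andP[ga /eqP]] | S0].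
  rewrite mulrn_card_pred => /eqP; rewrite -subr_eq0 opprK; apply: contraTneq => ->.
  by rewrite add0r addrC subr_eq0; rewrite !inE in ga.
exists (a - \sum_(x : G) x); rewrite mulrn_card_pred opprB eqxx andbT !inE.
by rewrite -subr_eq0 addrAC subrr add0r oppr_eq0.
Qed.

End SumOfAllElements.

Unset Implicit Arguments.

Theorem mainTheorem1 (G : finZmodType) (HG : (2 <= #|G|)%N) :
  BO G (#|G| - 1) = (if rank2 G == 1%N then (#|G| - 1)%N else (#|G|.+1)%N).
Proof.
rewrite -sum_finZmod_neq0; case: ifP => sumG; apply: BO_eq.
- apply: BO_prop_barycentric_sets => B cardB.
  by rewrite barycentric_card_pred cardB eqxx sumG.
- by move=> l; apply: BO_prop_ge; apply: leq_subr.
- exact: BO_prop_gt_card.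
- move=> l; apply: BO_prop_no_barycentric => B.
  by rewrite barycentric_card_pred sumG andbF.
Qed.
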